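(* Fix a sensor index $k$, integers $N\ge1$, $B_k\ge1$, $\Delta^{\max}\ge2$, probabilities $p_{k,1},\dots,p_{k,N}\in[0,1]$, $\lambda_k\in[0,1]$, and $\mu\ge0$. Let $\mathcal{S}_k=\{0,\dots,N\}\times\{0,\dots,B_k\}\times\{1,\dots,\Delta^{\max}\}$, $\mathcal{A}_k=\{0,1\}$, $c_k(s,a)=r\min\{(1-a\mathbf{1}\{b\ge1\})\Delta+1,\Delta^{\max}\}$ for $s=(r,b,\Delta)$, and let $\Pr(s'\mid s,a)$ be the transition probabilities defined as follows for $s'=(r',b',\Delta')$: $r'$ is distributed as $\sum_{n=1}^N X_n$ with independent $X_n\sim$ Bernoulli$(p_{k,n})$, independently of everything else; $b'=\min\{b+e-a\mathbf{1}\{b\ge1\},B_k\}$ with $e\sim$ Bernoulli$(\lambda_k)$ independent; $\Delta'=\min\{(1-a\mathbf{1}\{b\ge1\})\Delta+1,\Delta^{\max}\}$. Fix a reference state $s_{\mathrm{ref}}\in\mathcal{S}_k$, set $V^{(0)}\equiv0$, $h^{(0)}\equiv0$, and for $i=0,1,\dots$ define $V^{(i+1)}(s)=\min_{a\in\mathcal{A}_k}\big[c_k(s,a)+\mu a+\sum_{s'\in\mathcal{S}_k}\Pr(s'\mid s,a)h^{(i)}(s')\big]$, $h^{(i+1)}(s)=V^{(i+1)}(s)-V^{(i+1)}(s_{\mathrm{ref}})$. Let $V$ be the limit of $V^{(i)}$ as $i\to\infty$. Then $V$ is non-decreasing with respect to the AoI: for any two states $s=(r,b,\Delta)$ and $\bar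 s=(r,b,\bar\Delta)$ in $\mathcal{S}_k$ with $\bar\Delta\ge\Delta$, we have $V(\bar s)\ge V(s)$.
   Context: The iteration above is the relative value iteration algorithm for the per-sensor MDP with state space $\mathcal{S}_k$, action space $\mathcal{A}_k$, transition probabilities $\Pr(s'\mid s,a)$ and per-stage cost $c_k(s,a)+\mu a$; the limit $V$ is assumed to exist. *)

From HB Require Import structures.
From mathcomp Require Import all_boot all_order all_algebra.
From mathcomp Require Import all_classical all_reals topology normedtype sequences.
Set Implicit Arguments. Unset Strict Implicit. Unset Printing Implicit Defensive.
Import Order.TTheory GRing.Theory Num.Theory.
Local Open Scope ring_scope.

(* State (r, b, d) : r in {0..N}, b in {0..B}, and the AoI is Delta = d + 1
   in {1..Dmax} (d : 'I_Dmax). *)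
Definition state (N B Dmax : nat) := ('I_N.+1 * 'I_B.+1 * 'I_Dmax)%type.

Definition eff (a : bool) (b : nat) : bool := a && (0 < b)%N.

(* min{(1 - a 1{b>=1}) Delta + 1, Dmax}, with Delta = d+1 *)
Definition aoi_next (Dmax : nat) (d : nat) (u : bool) : nat :=
  minn ((if u then 0 else d.+1) + 1) Dmax.

Definition poisson_binomial {R : realType} {N : nat} (p : 'I_N -> R) (r : nat) : R :=
  \sum_(x : {ffun 'I_N -> bool} | #|[set i | x i]| == r)
     \prod_(i < N) (if x i then p i else 1 - p i).

Definition cost {R : realType} {N B Dmax} (s : state N B Dmax) (a : bool) : R :=
  let: (r, b, d) := s in
  (r : nat)%:R * (aoi_next Dmax d (eff a b))%:R.

Definition trans {R : realType} {N B Dmax} (p : 'I_N -> R) (lam : R)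
  (s : state N B Dmax) (a : bool) (s' : state N B Dmax) : R :=
  let: (r, b, d) := s in
  let: (r', b', d') := s' in
  let u := eff a b in
  poisson_binomial p r'
  * (lam * ((b' : nat) == minn (b.+1 - u) B)%:R
     + (1 - lam) * ((b' : nat) == minn (b - u) B)%:R)
  * ((d' : nat).+1 == aoi_next Dmax d u)%:R.

Definition bellman {R : realType} {N B Dmax} (p : 'I_N -> R) (lam mu : R)
  (h : state N B Dmax -> R) (s : state N B Dmax) : R :=
  let Q (a : bool) := cost s a + mu * (a : nat)%:R
                      + \sum_(s' : state N B Dmax) trans p lam s a s' * h s' in
  Num.min (Q false) (Q true).

Fixpoint rvi_h {R : realType} {N B Dmax} (p : 'I_N -> R) (lam mu : R)
  (sref : state N B Dmax) (i : nat) : state N B Dmax -> R :=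
  match i with
  | O => fun _ => 0
  | i'.+1 => fun s => bellman p lam mu (rvi_h p lam mu sref i') s
                      - bellman p lam mu (rvi_h p lam mu sref i') sref
  end.

Definition rvi_V {R : realType} {N B Dmax} (p : 'I_N -> R) (lam mu : R)
  (sref : state N B Dmax) (i : nat) : state N B Dmax -> R :=
  match i with
  | O => fun _ => 0
  | i'.+1 => bellman p lam mu (rvi_h p lam mu sref i')
  end.

From HB Require Import structures.
From mathcomp Require Import all_boot all_order all_algebra.
From mathcomp Require Import all_classical all_reals topology normedtype sequences.
From mathcomp Require Import zify.
Import Order.TTheory GRing.Theory Num.Theory.
Import numFieldTopology.Exports numFieldNormedType.Exports.
Local Open Scope classical_set_scope.
Local Open Scope ring_scope.

(* The AoI enters a Bellman step only through the cost, which is nondecreasing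
   in it, and through the next AoI, which is a deterministic nondecreasing
   function of it; the law of the other coordinates does not depend on it.
   Hence the Bellman operator preserves monotonicity in the AoI, so does the
   normalisation h = V - V(sref), and by induction every iterate V^(i) is
   monotone; the limit inherits this since limits preserve <=. *)

Lemma poisson_binomial_ge0 {R : realType} {N : nat} (p : 'I_N -> R) (r : nat) :
  (forall n, 0 <= p n <= 1) -> 0 <= poisson_binomial p r.
Proof.
move=> p01; apply: sumr_ge0 => x _; apply: prodr_ge0 => i _.
by have /andP[p_ge0 p_le1] := p01 i; case: (x i); rewrite ?subr_ge0.
Qed.

Lemma leq_aoi_next (Dmax d d' : nat) (u : bool) :
  (d <= d')%N -> (aoi_next Dmax d u <= aoi_next Dmax d' u)%N.
Proof. by rewrite /aoi_next; case: u => /=; lia. Qed.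

Section AoIMonotone.

Variables (R : realType) (N B Dmax : nat) (p : 'I_N -> R) (lam : R).
Hypothesis p01 : forall n, 0 <= p n <= 1.
Hypothesis lam01 : 0 <= lam <= 1.

Definition aoi_nondecreasing (h : state N B Dmax -> R) :=
  forall (r : 'I_N.+1) (b : 'I_B.+1) (d dbar : 'I_Dmax),
    (d <= dbar)%N -> h (r, b, d) <= h (r, b, dbar).

Lemma aoi_next_pred_lt (d : 'I_Dmax) (u : bool) : ((aoi_next Dmax d u).-1 < Dmax)%N.
Proof. by have := ltn_ord d; rewrite /aoi_next; lia. Qed.

(* The coordinate [d] stores the AoI minus one. *)
Definition aoi_next_ord (d : 'I_Dmax) (u : bool) : 'I_Dmax :=
  Ordinal (aoi_next_pred_lt d u).

Lemma aoi_next_ordE (d : 'I_Dmax) (u : bool) :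
  (aoi_next_ord d u).+1 = aoi_next Dmax d u.
Proof. by have := ltn_ord d; rewrite /= /aoi_next; lia. Qed.

Definition trans_rb (b : 'I_B.+1) (u : bool) (x : 'I_N.+1 * 'I_B.+1) : R :=
  let: (r', b') := x in
  poisson_binomial p r'
  * (lam * ((b' : nat) == minn (b.+1 - u) B)%:R
     + (1 - lam) * ((b' : nat) == minn (b - u) B)%:R).

Lemma trans_rb_ge0 b u x : 0 <= trans_rb b u x.
Proof.
case: x => r' b'; have /andP[lam_ge0 lam_le1] := lam01.
rewrite mulr_ge0 ?poisson_binomial_ge0 //.
by rewrite addr_ge0 // mulr_ge0 ?subr_ge0 ?ler0n.
Qed.

Lemma expected_next_value (h : state N B Dmax -> R) r b d a :
  \sum_(s' : state N B Dmax) trans p lam (r, b, d) a s' * h s' =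
  \sum_(x : 'I_N.+1 * 'I_B.+1)
    trans_rb b (eff a b) x * h (x.1, x.2, aoi_next_ord d (eff a b)).
Proof.
transitivity (\sum_(x : 'I_N.+1 * 'I_B.+1) \sum_(d' : 'I_Dmax)
                trans p lam (r, b, d) a (x, d') * h (x, d')).
  by rewrite pair_bigA; apply: eq_bigr => -[[r' b'] d'].
apply: eq_bigr => -[r' b'] _ /=.
rewrite (bigD1 (aoi_next_ord d (eff a b))) //= big1 => [|d' ne_d'].
  by rewrite aoi_next_ordE eqxx mulr1 addr0.
rewrite -aoi_next_ordE eqSS.
by have /negbTE -> : (d' : nat) != aoi_next_ord d (eff a b); rewrite ?mulr0 ?mul0r.
Qed.

Lemma bellman_aoi_nondecreasing (mu : R) (h : state N B Dmax -> R) :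
  aoi_nondecreasing h -> aoi_nondecreasing (bellman p lam mu h).
Proof.
move=> h_mono r b d dbar le_d.
suff le_Q (a : bool) :
  cost (r, b, d) a + \sum_s' trans p lam (r, b, d) a s' * h s' <=
  cost (r, b, dbar) a + \sum_s' trans p lam (r, b, dbar) a s' * h s'.
  by apply: le_min2; rewrite -!addrA !(addrCA (cost _ _)) lerD2l.
apply: lerD.
- by rewrite /cost ler_wpM2l ?ler0n // ler_nat leq_aoi_next.
- rewrite !expected_next_value; apply: ler_sum => x _.
  rewrite ler_wpM2l ?trans_rb_ge0 // h_mono // -ltnS !aoi_next_ordE.
  exact: leq_aoi_next.
Qed.

Lemma rvi_h_aoi_nondecreasing (mu : R) (sref : state N B Dmax) i :
  aoi_nondecreasing (rvi_h p lam mu sref i).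
Proof.
elim: i => [|i IH] r b d dbar le_d //=.
by rewrite lerD2r; apply: bellman_aoi_nondecreasing.
Qed.

Lemma rvi_V_aoi_nondecreasing (mu : R) (sref : state N B Dmax) i :
  aoi_nondecreasing (rvi_V p lam mu sref i).
Proof.
case: i => [|i] //=; apply: bellman_aoi_nondecreasing.
exact: rvi_h_aoi_nondecreasing.
Qed.

End AoIMonotone.

Theorem lemma1 (R : realType) (N B Dmax : nat)
  (p : 'I_N -> R) (lam mu : R) (sref : state N B Dmax)
  (V : state N B Dmax -> R) :
  (1 <= N)%N -> (1 <= B)%N -> (2 <= Dmax)%N ->
  (forall n, 0 <= p n <= 1) -> 0 <= lam <= 1 -> 0 <= mu ->
  (forall s, (fun i => rvi_V p lam mu sref i s) @ \oo --> V s) ->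
  forall (r : 'I_N.+1) (b : 'I_B.+1) (d dbar : 'I_Dmax),
    (d <= dbar)%N -> V (r, b, d) <= V (r, b, dbar).
Proof.
move=> _ _ _ p01 lam01 _ cvgV r b d dbar le_d.
apply: (ler_cvg_to (cvgV (r, b, d)) (cvgV (r, b, dbar))).
by apply: nearW => i; apply: rvi_V_aoi_nondecreasing.
Qed.
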